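(* In the setting described in the context, if Method 1 stops at iteration $k$ (i.e. $x^{k+1}=x^k$), then $x^k\in\operatorname{zer}(A+B)$.
   Context: Let $\mathcal H$ be a real Hilbert space with inner product $\langle\cdot,\cdot\rangle$ and norm $\|\cdot\|$. Let $A_1:\mathcal H\to\mathcal H$ be $\beta$-cocoercive for some $\beta>0$ (i.e. $\langle A_1x-A_1y,x-y\rangle\ge\beta\|A_1x-A_1y\|^2$ for all $x,y$), let $A_2:\mathcal H\to\mathcal H$ be maximally monotone and uniformly continuous, let $B:\mathcal H\rightrightarrows\mathcal H$ be maximally monotone, and set $A:=A_1+A_2$. Assume $\operatorname{zer}(A+B):=\{x:0\in Ax+Bx\}\neq\emptyset$. $J_{\alpha B}:=(I+\alpha B)^{-1}$ for $\alpha>0$, and $P_C$ denotes the orthogonal projection onto a nonempty closed convex set $C$. Fix $\theta,\delta\in(0,1)$, $\bar\delta>0$ with $1-\delta-\bar\delta>0$, and $\alpha_{-1}>0$ with $\alpha_{-1}\le4\beta\bar\delta$. Conceptual Algorithm: pick $x^0\in\mathcal H$. Given $x^k$ and $\alpha_{k-1}$, for $j\in\mathbb N$ let $\bar x^k_j:=J_{\alpha_{k-1}\theta^jB}(x^k-\alpha_{k-1}\theta^jAx^k)$ and let $j(k)$ be the smallest $j\in\mathbb N$ with $\alpha_{k-1}\theta^j\langle A_2x^k-A_2\bar x^k_j,x^k-\bar x^k_j\rangle\le\delta\|x^k-\bar x^k_j\|^2$. Set $\alpha_k:=\alpha_{k-1}\theta^{j(k)}$, $\bar x^k:=J_{\alpha_kB}(x^k-\alpha_kAx^k)$,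 $r_k:=\frac{\bar\delta}{\alpha_k}\|x^k-\bar x^k\|^2$ and $T_k:=\{x\in\mathcal H:\langle \frac{x^k-\bar x^k}{\alpha_k}-(A_2x^k-A_2\bar x^k),x-\bar x^k\rangle\le r_k\}$. Method 1 sets $x^{k+1}:=P_{T_k}(x^k)$ and stops if $x^{k+1}=x^k$. *)

(* scalars R : realType, Hilbert space = lmodType R with an
   inner product that is complete for the induced norm. *)
From HB Require Import structures.
From mathcomp Require Import all_boot all_order all_algebra.
From mathcomp Require Import reals.
Set Implicit Arguments. Unset Strict Implicit. Unset Printing Implicit Defensive.
Import Order.TTheory GRing.Theory Num.Theory.
Local Open Scope ring_scope.

Section Hilbert.
Variables (R : realType) (H : lmodType R) (ip : H -> H -> R).

Definition is_inner_product : Prop :=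
  (forall a x y z, ip (a *: x + y) z = a * ip x z + ip y z) /\
  (forall x y, ip x y = ip y x) /\
  (forall x, 0 <= ip x x) /\
  (forall x, ip x x = 0 -> x = 0).

Definition hnorm (x : H) : R := Num.sqrt (ip x x).

Definition hcomplete : Prop :=
  forall u : nat -> H,
    (forall e : R, 0 < e -> exists N : nat, forall m n : nat,
        (N <= m)%N -> (N <= n)%N -> hnorm (u m - u n) < e) ->
    exists l : H, forall e : R, 0 < e -> exists N : nat, forall n : nat,
        (N <= n)%N -> hnorm (u n - l) < e.

Definition hilbert : Prop := is_inner_product /\ hcomplete.

Definition cocoercive (A : H -> H) (beta : R) : Prop :=
  forall x y, ip (A x - A y) (x - y) >= beta * (hnorm (A x - A y)) ^+ 2.

(* set-valued operators as relations: B x u means u \in B x *)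
Definition monotone (B : H -> H -> Prop) : Prop :=
  forall x u y v, B x u -> B y v -> 0 <= ip (x - y) (u - v).

Definition maximal_monotone (B : H -> H -> Prop) : Prop :=
  monotone B /\
  forall x u, (forall y v, B y v -> 0 <= ip (x - y) (u - v)) -> B x u.

Definition graph (f : H -> H) : H -> H -> Prop := fun x u => u = f x.

Definition unif_continuous (f : H -> H) : Prop :=
  forall e : R, 0 < e -> exists d : R, 0 < d /\
    forall x y, hnorm (x - y) < d -> hnorm (f x - f y) < e.

(* p \in J_{aB}(z) = (I + aB)^{-1}(z), i.e. z \in p + a B p *)
Definition in_resolvent (a : R) (B : H -> H -> Prop) (z p : H) : Prop :=
  exists b, B p b /\ z = p + a *: b.

Definition in_zer (A : H -> H) (B : H -> H -> Prop) (x : H) : Prop :=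
  exists b, B x b /\ A x + b = 0.

Definition is_proj (C : H -> Prop) (x p : H) : Prop :=
  C p /\ forall y, C y -> hnorm (x - p) <= hnorm (x - y).

(* Iterations 0..k of Method 1 (Conceptual Algorithm + projection step).
   Indexing: alpha 0 = alpha_{-1}, alpha i.+1 = alpha_i;
   xt i j = \bar x^i_j, jk i = j(i), xb i = \bar x^i. *)
Definition method1_run (A1 A2 : H -> H) (B : H -> H -> Prop)
    (theta delta deltab : R) (x : nat -> H) (alpha : nat -> R)
    (xt : nat -> nat -> H) (jk : nat -> nat) (xb : nat -> H) (k : nat) : Prop :=
  let A := fun z => A1 z + A2 z in
  forall i : nat, (i <= k)%N ->
    let cond := fun j : nat =>
      alpha i * theta ^+ j * ip (A2 (x i) - A2 (xt i j)) (x i - xt i j)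
        <= delta * (hnorm (x i - xt i j)) ^+ 2 in
    (forall j : nat,
        in_resolvent (alpha i * theta ^+ j) B
          (x i - (alpha i * theta ^+ j) *: A (x i)) (xt i j)) /\
    cond (jk i) /\ (forall j : nat, (j < jk i)%N -> ~ cond j) /\
    alpha i.+1 = alpha i * theta ^+ (jk i) /\
    in_resolvent (alpha i.+1) B (x i - alpha i.+1 *: A (x i)) (xb i) /\
    let r := deltab / alpha i.+1 * (hnorm (x i - xb i)) ^+ 2 in
    let T := fun y : H =>
      ip ((alpha i.+1)^-1 *: (x i - xb i) - (A2 (x i) - A2 (xb i))) (y - xb i)
        <= r in
    is_proj T (x i) (x i.+1).

End Hilbert.

(** At a stop, x^k = P_{T_k}(x^k) lies in the half-space T_k.  Multiplying
    that inequality by alpha_k and adding the line-search inequality gives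
    (1 - delta - deltab) ||x^k - xbar^k||^2 <= 0, so x^k = xbar^k is a fixed
    point of the forward-backward map J_{alpha_k B} (I - alpha_k A), i.e. a
    zero of A + B.  Besides the inner-product axioms, only the monotonicity
    of B is needed, to identify xbar^k_{j(k)} with xbar^k. *)
From HB Require Import structures.
From mathcomp Require Import all_boot all_order all_algebra.
From mathcomp Require Import reals.
From mathcomp Require Import ring lra.
Import Order.TTheory GRing.Theory Num.Theory.
Local Open Scope ring_scope.

Set Implicit Arguments.
Unset Strict Implicit.

Section InnerProduct.
Variables (R : realType) (H : lmodType R) (ip : H -> H -> R).
Hypothesis hip : is_inner_product ip.

Lemma ip0l z : ip 0 z = 0.
Proof.
case: hip => lin _; have := lin 1 0 0 z.
rewrite scaler0 addr0 mul1r => E.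
by apply/eqP; rewrite -(subrr (ip 0 z)) {2}E addrK.
Qed.

Lemma ipDl x y z : ip (x + y) z = ip x z + ip y z.
Proof. by case: hip => lin _; rewrite -{1}(scale1r x) lin mul1r. Qed.

Lemma ipZl a x z : ip (a *: x) z = a * ip x z.
Proof. by case: hip => lin _; rewrite -[a *: x]addr0 lin ip0l addr0. Qed.

Lemma ipNl x z : ip (- x) z = - ip x z.
Proof. by rewrite -scaleN1r ipZl mulN1r. Qed.

Lemma ipBl x y z : ip (x - y) z = ip x z - ip y z.
Proof. by rewrite ipDl ipNl. Qed.

Lemma ip_ge0 x : 0 <= ip x x.
Proof. by case: hip => _ [_ [ge0 _]]. Qed.

Lemma ip_eq0 x : ip x x = 0 -> x = 0.
Proof. by case: hip => _ [_ [_ eq0]]; apply: eq0. Qed.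

Lemma hnorm_sqr x : hnorm ip x ^+ 2 = ip x x.
Proof. by rewrite /hnorm sqr_sqrtr // ip_ge0. Qed.

Lemma resolvent_uniq a (B : H -> H -> Prop) z p q :
  monotone ip B -> 0 < a ->
  in_resolvent a B z p -> in_resolvent a B z q -> p = q.
Proof.
move=> monoB a_gt0 [b [Bpb zE]] [c [Bqc zE']].
have pqE : p - q = a *: (c - b).
  have -> : p = z - a *: b by rewrite zE addrK.
  have -> : q = z - a *: c by rewrite zE' addrK.
  by rewrite scalerBr opprB addrC -addrA addKr.
have := monoB _ _ _ _ Bpb Bqc.
rewrite pqE ipZl -[c - b]opprB ipNl mulrN oppr_ge0.
rewrite pmulr_rle0 // => le0.
have /ip_eq0/eqP : ip (b - c) (b - c) = 0.
  by apply/eqP; rewrite eq_le le0 ip_ge0.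
rewrite subr_eq0 => /eqP bc.
by apply/eqP; rewrite -subr_eq0 pqE bc subrr scaler0.
Qed.

Lemma in_zer_resolvent_fixpoint a (A : H -> H) (B : H -> H -> Prop) x :
  0 < a -> in_resolvent a B (x - a *: A x) x -> in_zer A B x.
Proof.
move=> a_gt0 [b [Bxb /addrI xE]]; exists b; split => //.
have /eqP : a *: (A x + b) = 0 by rewrite scalerDr -xE subrr.
by rewrite scaler_eq0 gt_eqF //= => /eqP.
Qed.

Lemma linesearch_halfspace_eq a delta deltab (w x xb : H) :
  0 < a -> 0 < 1 - delta - deltab ->
  a * ip w (x - xb) <= delta * hnorm ip (x - xb) ^+ 2 ->
  ip (a^-1 *: (x - xb) - w) (x - xb) <= deltab / a * hnorm ip (x - xb) ^+ 2 ->
  xb = x.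
Proof.
move=> a_gt0 gap search halfspace.
rewrite hnorm_sqr in search; rewrite ipBl ipZl hnorm_sqr in halfspace.
set N := ip (x - xb) (x - xb) in search halfspace.
set g := ip w (x - xb) in search halfspace.
have scaled : N - a * g <= deltab * N.
  have a_neq0 : a != 0 by rewrite gt_eqF.
  have -> : N - a * g = a * (a^-1 * N - g) by field.
  have -> : deltab * N = a * (deltab / a * N) by field.
  by rewrite ler_pM2l.
have N_eq0 : N = 0.
  apply/eqP; rewrite eq_le ip_ge0 andbT -(pmulr_rle0 _ gap); lra.
by apply/eqP; rewrite eq_sym -subr_eq0; apply/eqP/ip_eq0.
Qed.

End InnerProduct.

Lemma method1_stepsize_gt0 (R : realType) (H : lmodType R) (ip : H -> H -> R)
    A1 A2 B theta delta deltab x alpha xt jk xb k :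
  0 < theta -> 0 < alpha 0%N ->
  method1_run ip A1 A2 B theta delta deltab x alpha xt jk xb k ->
  forall i, (i <= k)%N -> 0 < alpha i.+1.
Proof.
move=> theta_gt0 alpha0_gt0 run; elim=> [|i IH] ik;
  have [_ [_ [_ [-> _]]]] := run _ ik.
  by rewrite mulr_gt0 // exprn_gt0.
by rewrite mulr_gt0 ?exprn_gt0 // IH // ltnW.
Qed.

Unset Implicit Arguments.

Theorem proposition4p6 (R : realType) (H : lmodType R) (ip : H -> H -> R)
  (A1 A2 : H -> H) (B : H -> H -> Prop) (beta theta delta deltab : R)
  (x : nat -> H) (alpha : nat -> R) (xt : nat -> nat -> H) (jk : nat -> nat)
  (xb : nat -> H) (k : nat) :
  hilbert ip ->
  0 < beta -> cocoercive ip A1 beta ->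
  maximal_monotone ip (graph A2) -> unif_continuous ip A2 ->
  maximal_monotone ip B ->
  (exists z, in_zer (fun y => A1 y + A2 y) B z) ->
  0 < theta < 1 -> 0 < delta < 1 -> 0 < deltab -> 0 < 1 - delta - deltab ->
  0 < alpha 0%N -> alpha 0%N <= 4 * beta * deltab ->
  method1_run ip A1 A2 B theta delta deltab x alpha xt jk xb k ->
  (forall i : nat, (i < k)%N -> x i.+1 <> x i) ->
  x k.+1 = x k ->
  in_zer (fun y => A1 y + A2 y) B (x k).
Proof.
move=> [hip _] _ _ _ _ [monoB _] _ /andP[theta_gt0 _] _ _ gap alpha0_gt0 _
  run _ stop.
have a_gt0 := method1_stepsize_gt0 theta_gt0 alpha0_gt0 run (leqnn k).
have [xtE [search [_ [alphaE [xbE [halfspace _]]]]]] := run k (leqnn k).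
have xt_xb : xt k (jk k) = xb k.
  by apply: (resolvent_uniq hip monoB a_gt0 _ xbE); rewrite alphaE; apply: xtE.
move: search halfspace; rewrite /= -alphaE xt_xb stop => search halfspace.
have xb_x := linesearch_halfspace_eq hip a_gt0 gap search halfspace.
by apply: (in_zer_resolvent_fixpoint a_gt0); rewrite -[in X in in_resolvent _ _ _ X]xb_x.
Qed.
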